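(* For every integer $n \geq 1$, $D_n = n\, Der_{n-1}$.
   Context: A linear arrangement of $\{1,\ldots,n\}$ is a sequence $a_1\cdots a_n$ in which each of $1,\ldots,n$ appears exactly once. It contains the pattern $ij$ if $a_t=i$ and $a_{t+1}=j$ for some $t$; otherwise it avoids it. $D_n$ is the number of linear arrangements of $\{1,\ldots,n\}$ avoiding all of the patterns $12, 23, \ldots, (n-1)n, n1$. $Der_m$ is the number of permutations of $\{1,\ldots,m\}$ with no fixed point (so $Der_0 = 1$). *)

From mathcomp Require Import all_boot all_order all_fingroup.
Set Implicit Arguments. Unset Strict Implicit. Unset Printing Implicit Defensive.

(* Values 1..n are encoded as 0..n-1 (type 'I_n); positions 1..n likewise.
   A linear arrangement a_1...a_n is a permutation s : {perm 'I_n}, with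
   s t = a_{t+1} (position t, value s t). *)

Definition contains_pattern (n : nat) (s : {perm 'I_n}) (i j : 'I_n) : bool :=
  [exists t : 'I_n, exists u : 'I_n, (val u == (val t).+1) && (s t == i) && (s u == j)].

Definition avoids_cyclic (n : nat) (s : {perm 'I_n}) : bool :=
  [forall i : 'I_n, forall j : 'I_n,
     (val j == ((val i).+1 %% n)) ==> ~~ contains_pattern s i j].

Definition D (n : nat) : nat := #|[set s : {perm 'I_n} | avoids_cyclic s]|.

Definition Der (m : nat) : nat := #|[set s : {perm 'I_m} | [forall i, s i != i]]|.

From mathcomp Require Import all_boot all_order all_fingroup.
From mathcomp Require Import ssralg zmodp zify.
Set Implicit Arguments. Unset Strict Implicit. Unset Printing Implicit Defensive.

(* Adding c modulo n to every value preserves the avoidance of the cyclic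
   patterns and moves the first value from 0 to c, so D_n = n A_{n-1}, where
   A_k counts the arrangements of {0, ..., k} that start with 0 and contain no
   succession v (v+1); with 0 in front, the wrap-around pattern (n-1) 0 cannot
   occur.  Deleting the largest value k+2 from such an arrangement, and merging
   into v a succession v (v+1) that the deletion may create, yields
   A_{k+2} = (k+1) (A_{k+1} + A_k), as in either case the deleted value can sit
   in k+1 places.  This is the recurrence of the derangement numbers, and
   A_0 = 1 = Der_0, A_1 = 0 = Der_1. *)

Lemma card_inj_onto (aT rT : finType) (f : aT -> rT) (A : {set aT}) (B : {set rT}) :
    {in A &, injective f} -> {in A, forall x, f x \in B} ->
  (forall y, y \in B -> exists2 x, x \in A & y = f x) -> #|B| = #|A|.
Proof.
move=> f_inj fAB ontoB; rewrite -(card_in_imset f_inj); apply: eq_card => y.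
by apply/idP/imsetP => [/ontoB | [x /fAB Bfx ->]].
Qed.

Lemma card_inj_preim (aT rT : finType) (f : aT -> rT) (A : {set aT}) (B : {set rT}) :
    injective f -> (forall x, (f x \in B) = (x \in A)) ->
  (forall y, y \in B -> exists x, y = f x) -> #|B| = #|A|.
Proof.
move=> f_inj memf ontoB; apply: card_inj_onto (in2W f_inj) _ _ => [x|y By].
  by rewrite memf.
by have [x def_y] := ontoB y By; exists x; rewrite // -memf -def_y.
Qed.

Section UnliftPerm.
Variables (k : nat) (t : 'S_k.+1) (i : 'I_k.+1).

Definition unlift_perm_fun (w : 'I_k) : 'I_k := odflt w (unlift (t i) (t (lift i w))).

Lemma lift_unlift_perm_fun w : lift (t i) (unlift_perm_fun w) = t (lift i w).
Proof.
rewrite /unlift_perm_fun.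
have /unlift_some[j -> ->] // : t i != t (lift i w).
by rewrite (inj_eq perm_inj) neq_lift.
Qed.

Lemma unlift_perm_fun_inj : injective unlift_perm_fun.
Proof.
move=> w w' /(congr1 (lift (t i))).
by rewrite !lift_unlift_perm_fun => /perm_inj /lift_inj.
Qed.

Definition unlift_perm : 'S_k := perm unlift_perm_fun_inj.

Lemma lift_unlift_perm w : lift (t i) (unlift_perm w) = t (lift i w).
Proof. by rewrite permE lift_unlift_perm_fun. Qed.

Lemma unlift_permK j : t i = j -> lift_perm i j unlift_perm = t.
Proof.
move=> <-; apply/permP => x; case: (unliftP i x) => [w|] ->.
  by rewrite lift_perm_lift lift_unlift_perm.
by rewrite lift_perm_id.
Qed.

End UnliftPerm.

Lemma lift_perm_inj k (i j : 'I_k.+1) : injective (lift_perm i j).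
Proof.
move=> s s' /permP e; apply/permP => w.
by have := e (lift i w); rewrite !lift_perm_lift => /lift_inj.
Qed.

Lemma lift_perm_pair_inj k (j : 'I_k.+1) :
  injective (fun x : 'I_k.+1 * 'S_k => lift_perm x.1 j x.2).
Proof.
move=> [i s] [i' s'] /= e.
have ei : i = i'.
  apply: (@perm_inj _ (lift_perm i j s)).
  by rewrite {2}e !lift_perm_id.
by move: e; rewrite -ei => /lift_perm_inj ->.
Qed.

Definition derangements m := [set s : 'S_m | [forall i, s i != i]].

Section DerangementRecurrence.
Variable k : nat.
Local Notation N := (@ord_max k.+1).

(* [derange_ins (q, p)] inserts N into the cycle of p right after q. *)
Definition derange_ins (x : 'I_k.+1 * 'S_k.+1) : 'S_k.+2 :=
  (tperm (lift N x.1) N * lift_perm N N x.2)%g.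

Definition derange_pairs :=
  [set x : 'I_k.+1 * 'S_k.+1 | [forall w, (w != x.1) ==> (x.2 w != w)]].

Lemma derange_ins_lift x w : w != x.1 -> derange_ins x (lift N w) = lift N (x.2 w).
Proof.
move=> hw; rewrite permM tpermD ?lift_perm_lift ?neq_lift //.
by rewrite (inj_eq lift_inj) eq_sym.
Qed.

Lemma derange_ins_inj : injective derange_ins.
Proof.
move=> [q p] [q' p'] e.
have eq_q : q = q'.
  apply/eqP; apply: contraT => hq.
  have := @derange_ins_lift (q', p') q hq.
  by rewrite -e permM tpermL lift_perm_id => /eqP; rewrite (negPf (neq_lift _ _)).
by move: e; rewrite -eq_q => /mulgI /lift_perm_inj /= ->.
Qed.

Lemma derange_ins_mem x : (derange_ins x \in derangements k.+2) = (x \in derange_pairs).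
Proof.
rewrite !inE; apply/forallP/forallP => h.
- move=> w; apply/implyP => hw.
  by have := h (lift N w); rewrite derange_ins_lift // (inj_eq lift_inj).
- move=> y; case: (unliftP N y) => [w|] ->.
  + case: (eqVneq w x.1) => [->|hw].
      by rewrite permM tpermL lift_perm_id neq_lift.
    by rewrite derange_ins_lift // (inj_eq lift_inj) (implyP (h w)).
  + by rewrite permM tpermR lift_perm_lift eq_sym neq_lift.
Qed.

Lemma derange_ins_onto s : s \in derangements k.+2 -> exists x, s = derange_ins x.
Proof.
rewrite inE => /forallP sN.
have : N != (s^-1)%g N by apply: contraNneq (sN N) => {1}->; rewrite permKV.
case/unlift_some => q def_q _.
pose r := (tperm (lift N q) N * s)%g.
have rN : r N = N by rewrite permM tpermR -def_q permKV.
exists (q, unlift_perm r N); rewrite /derange_ins /= (unlift_permK rN).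
by rewrite mulgA tperm2 mul1g.
Qed.

Definition fixed_at := [set x : 'I_k.+1 * 'S_k.+1 | x.2 x.1 == x.1].

Lemma Der_derange_pairs : Der k.+2 = #|derange_pairs|.
Proof. exact: card_inj_preim derange_ins_inj derange_ins_mem derange_ins_onto. Qed.

Lemma derange_pairsD_fixed :
  derange_pairs :\: fixed_at = setX setT (derangements k.+1).
Proof.
apply/setP => -[q p]; rewrite !inE /=; apply/andP/forallP => [[pq /forallP h] w|h].
  by case: (eqVneq w q) => [->|hw] //; exact: (implyP (h w)).
by split; [exact: h | apply/forallP => w; rewrite h implybT].
Qed.

Lemma card_derange_pairsI_fixed :
  #|derange_pairs :&: fixed_at| = #|setX [set: 'I_k.+1] (derangements k)|.
Proof.
apply: (@card_inj_preim _ _ (fun x : 'I_k.+1 * 'S_k => (x.1, lift_perm x.1 x.1 x.2))).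
- by move=> [q p] [q' p'] [<-] /lift_perm_inj ->.
- move=> [q p]; rewrite !inE /= lift_perm_id eqxx andbT.
  apply/forallP/forallP => h w.
    by have := h (lift q w); rewrite eq_sym neq_lift lift_perm_lift (inj_eq lift_inj).
  apply/implyP; case: (unliftP q w) => [v|] -> //; last by rewrite eqxx.
  by rewrite lift_perm_lift (inj_eq lift_inj) h.
- move=> [q p]; rewrite !inE /= => /andP[_ /eqP pq].
  by exists (q, unlift_perm p q); rewrite /= (unlift_permK pq).
Qed.

Lemma DerSS : Der k.+2 = k.+1 * (Der k.+1 + Der k).
Proof.
rewrite Der_derange_pairs -(cardsID fixed_at).
rewrite card_derange_pairsI_fixed derange_pairsD_fixed !cardsX cardsT card_ord.
by rewrite mulnDr addnC.
Qed.

End DerangementRecurrence.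

Lemma Der0 : Der 0 = 1.
Proof.
rewrite /Der (_ : [set s : 'S_0 | _] = setT) ?cardsT ?card_Sn //.
by apply/setP => s; rewrite !inE; apply/forallP => -[].
Qed.

Lemma Der1 : Der 1 = 0.
Proof.
apply/eqP; rewrite cards_eq0; apply/eqP/setP => s; rewrite !inE.
by apply/negP => /forallP /(_ ord0); rewrite [s ord0]ord1 eqxx.
Qed.

Lemma bumpE h i : bump h i = if h <= i then i.+1 else i.
Proof. by rewrite /bump; case: leqP. Qed.

Lemma bump_succ_eq h i j :
  (bump h j == (bump h i).+1) = (j == i.+1) && (i.+1 != h).
Proof. by rewrite !bumpE; do 2 case: leqP => ?; apply/idP/idP; lia. Qed.

Lemma bump_eq_succ h i : (bump h i == h.+1) = (i == h).
Proof. by rewrite bumpE; case: leqP => ?; apply/idP/idP; lia. Qed.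

(* [natp s] reads [s] as a function on [nat], with junk value 0 outside
   [0, n), so that conditions on adjacent positions become arithmetic. *)
Definition natp n (s : 'S_n) (x : nat) : nat :=
  oapp (fun i : 'I_n => val (s i)) 0 (insub x).

Lemma natpE n (s : 'S_n) (i : 'I_n) : natp s i = s i.
Proof. by rewrite /natp valK. Qed.

Lemma natp_ord n (s : 'S_n) x (hx : x < n) : natp s x = s (Ordinal hx).
Proof. by rewrite -natpE. Qed.

Lemma natp_lt n (s : 'S_n) x : x < n -> natp s x < n.
Proof. by move=> hx; rewrite (natp_ord s hx). Qed.

Lemma natp_inj n (s : 'S_n) x y : x < n -> y < n -> natp s x = natp s y -> x = y.
Proof.
move=> hx hy; rewrite (natp_ord s hx) (natp_ord s hy) => /val_inj /perm_inj.
by case.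
Qed.

Lemma natp0E n (s : 'S_n.+1) : (natp s 0 == 0) = (s ord0 == ord0).
Proof. by rewrite (natpE s ord0). Qed.

Section NatpLiftPerm.
Variables (k : nat) (p v : 'I_k.+1) (s : 'S_k).

Lemma natp_lift_perm_bump (w : 'I_k) :
  natp (lift_perm p v s) (bump p w) = bump v (natp s w).
Proof. by rewrite -[bump p w]/(val (lift p w)) !natpE lift_perm_lift. Qed.

Lemma natp_lift_perm_id : natp (lift_perm p v s) p = v.
Proof. by rewrite natpE lift_perm_id. Qed.

Lemma natp_lift_perm_lt y : y < p -> natp (lift_perm p v s) y = bump v (natp s y).
Proof.
move=> yp; have yk : y < k by have := ltn_ord p; lia.
by have := natp_lift_perm_bump (Ordinal yk); rewrite /= bumpE leqNgt yp.
Qed.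

Lemma natp_lift_perm_gt y :
  p < y -> y < k.+1 -> natp (lift_perm p v s) y = bump v (natp s y.-1).
Proof.
move=> py yk; have yk' : y.-1 < k by lia.
have py' : p <= y.-1 by lia.
by have := natp_lift_perm_bump (Ordinal yk'); rewrite /= bumpE py' prednK //; lia.
Qed.

End NatpLiftPerm.

Definition nosucc_on n (s : 'S_n) (P : pred nat) : bool :=
  [forall t : 'I_n, (t.+1 < n) && P t ==> (natp s t.+1 != (natp s t).+1)].

Lemma nosucc_onP n (s : 'S_n) (P : pred nat) :
  reflect (forall t, t.+1 < n -> P t -> natp s t.+1 != (natp s t).+1) (nosucc_on s P).
Proof.
apply: (iffP forallP) => [h t tn Pt | h t].
  by have := h (Ordinal (ltnW tn)); rewrite /= tn Pt.
by apply/implyP => /andP[]; exact: h.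
Qed.

Definition nosucc0 k := [set s : 'S_k.+1 | (natp s 0 == 0) && nosucc_on s predT].

Section NosuccRecurrence.
Variable k : nat.

Definition ins_max (x : 'I_k.+2 * 'S_k.+2) : 'S_k.+3 :=
  lift_perm (lift ord0 x.1) ord_max x.2.

Lemma natp_ins_max_le (q : 'I_k.+2) s y : y <= q -> natp (ins_max (q, s)) y = natp s y.
Proof.
move=> yq; have qk := ltn_ord q.
by rewrite natp_lift_perm_lt ?lift0 // bumpE leqNgt natp_lt //=; lia.
Qed.

Lemma natp_ins_max_mid (q : 'I_k.+2) s : natp (ins_max (q, s)) q.+1 = k.+2.
Proof. by rewrite -lift0 natp_lift_perm_id. Qed.

Lemma natp_ins_max_gt (q : 'I_k.+2) s y :
  q.+1 < y -> y < k.+3 -> natp (ins_max (q, s)) y = natp s y.-1.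
Proof.
move=> qy yk.
by rewrite natp_lift_perm_gt ?lift0 // bumpE leqNgt natp_lt //=; lia.
Qed.

Definition ins_max_pairs := [set x : 'I_k.+2 * 'S_k.+2 |
  [&& natp x.2 0 == 0, natp x.2 x.1 != k.+1 & nosucc_on x.2 (fun t => t != x.1)]].

Lemma ins_max_mem x : (ins_max x \in nosucc0 k.+2) = (x \in ins_max_pairs).
Proof.
case: x => q s; have qk := ltn_ord q.
rewrite !inE /= natp_ins_max_le //; congr (_ && _).
apply/nosucc_onP/andP => [h | [sq /nosucc_onP h] t tk _].
- split.
    have := h q ltac:(lia) isT.
    by rewrite natp_ins_max_mid natp_ins_max_le //; apply: contra => /eqP ->.
  apply/nosucc_onP => t tk tq; have [tlt|tge] := ltnP t q.
    by have := h t ltac:(lia) isT; rewrite !natp_ins_max_le //; lia.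
  by have := h t.+1 ltac:(lia) isT; rewrite !natp_ins_max_gt //=; lia.
- have [tq|qt|->] := ltngtP t q.
  + by rewrite !natp_ins_max_le //; [apply: h|]; lia.
  + have [tq1|tq1] := eqVneq t q.+1.
      subst t; rewrite natp_ins_max_mid.
      by have := natp_lt (ins_max (q, s)) tk; lia.
    rewrite !natp_ins_max_gt /=; try lia.
    by have := h t.-1; rewrite prednK; lia.
  + by rewrite natp_ins_max_mid natp_ins_max_le //; lia.
Qed.

Lemma ins_max_inj : injective ins_max.
Proof.
move=> [q s] [q' s'] /(@lift_perm_pair_inj _ ord_max (lift ord0 q, s) (lift ord0 q', s')).
by case=> /val_inj -> ->.
Qed.

Lemma ins_max_onto s : s \in nosucc0 k.+2 -> exists x, s = ins_max x.
Proof.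
rewrite inE => /andP[/eqP s0 _].
have : ord0 != (s^-1)%g ord_max.
  by apply/eqP => e; move: s0; rewrite (natpE s ord0) e permKV.
case/unlift_some => q def_q _.
exists (q, unlift_perm s (lift ord0 q)).
by rewrite /ins_max (unlift_permK (esym _)) // -def_q permKV.
Qed.

Lemma card_ins_max_pairs : #|nosucc0 k.+2| = #|ins_max_pairs|.
Proof. exact: card_inj_preim ins_max_inj ins_max_mem ins_max_onto. Qed.

Definition succ_at := [set x : 'I_k.+2 * 'S_k.+2 |
  (x.1.+1 < k.+2) && (natp x.2 x.1.+1 == (natp x.2 x.1).+1)].

Lemma ins_max_pairsD_succ : ins_max_pairs :\: succ_at =
  [set x : 'I_k.+2 * 'S_k.+2 | (x.2 \in nosucc0 k.+1) && (natp x.2 x.1 != k.+1)].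
Proof.
apply/setP => -[q s]; rewrite !inE /=; apply/idP/idP.
- case/and4P=> nsq -> -> /nosucc_onP h; rewrite !andbT /=.
  apply/nosucc_onP => t tk _; have [tq|] := eqVneq t q; last exact: h.
  by move: nsq; rewrite -tq tk.
- case/andP=> /andP[-> /nosucc_onP h] -> /=; apply/andP; split.
    by rewrite negb_and -implybE; apply/implyP => qk; exact: h.
  by apply/nosucc_onP => t tk _; exact: h.
Qed.

Lemma card_ins_max_pairsD_succ :
  #|ins_max_pairs :\: succ_at| = #|setX [set: 'I_k.+1] (nosucc0 k.+1)|.
Proof.
rewrite ins_max_pairsD_succ.
apply: (@card_inj_preim _ _
  (fun x : 'I_k.+1 * 'S_k.+2 => (lift ((x.2)^-1 ord_max)%g x.1, x.2))).
- by move=> [q s] [q' s'] [+ ss]; rewrite -ss => /(can_inj (bumpK _)) /val_inj ->.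
- move=> [q s]; rewrite !inE /= (natpE s (lift ((s^-1)%g ord_max) q)).
  rewrite -[k.+1]/(val (@ord_max k.+1)) (inj_eq val_inj).
  suff -> : s (lift ((s^-1)%g ord_max) q) != ord_max by rewrite andbT.
  by rewrite -(inj_eq (@perm_inj _ (s^-1)%g)) permK eq_sym neq_lift.
- move=> [q s]; rewrite !inE /= natpE => /andP[sN sq].
  have : (s^-1)%g ord_max != q.
    by apply: contra sq => /eqP <-; rewrite permKV.
  by case/unlift_some => q' -> _; exists (q', s).
Qed.

(* Replaces the value [s q] by the succession [(s q) (s q + 1)], raising
   all larger values by one. *)
Definition ins_succ (y : 'I_k.+1 * 'S_k.+1) : 'I_k.+2 * 'S_k.+2 :=
  (widen_ord (leqnSn _) y.1, lift_perm (lift ord0 y.1) (lift ord0 (y.2 y.1)) y.2).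

Lemma natp_ins_succ_le (q : 'I_k.+1) s y : y <= q ->
  natp (ins_succ (q, s)).2 y = bump (natp s q).+1 (natp s y).
Proof. by move=> yq; rewrite natp_lift_perm_lt ?lift0 // natpE. Qed.

Lemma natp_ins_succ_mid (q : 'I_k.+1) s : natp (ins_succ (q, s)).2 q.+1 = (natp s q).+1.
Proof. by rewrite -lift0 natp_lift_perm_id lift0 natpE. Qed.

Lemma natp_ins_succ_gt (q : 'I_k.+1) s y : q.+1 < y -> y < k.+2 ->
  natp (ins_succ (q, s)).2 y = bump (natp s q).+1 (natp s y.-1).
Proof. by move=> qy yk; rewrite natp_lift_perm_gt ?lift0 // natpE. Qed.

Lemma nosucc_on_ins_succ (q : 'I_k.+1) s :
  nosucc_on (ins_succ (q, s)).2 (fun t => t != q) = nosucc_on s predT.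
Proof.
have qk := ltn_ord q.
have neq_q t : t < k.+1 -> t != q -> (natp s t).+1 != (natp s q).+1.
  by move=> tk; apply: contra => /eqP [] /(natp_inj tk qk) ->.
apply/nosucc_onP/nosucc_onP => h t tk tq.
- have [tlt|qt|tq'] := ltngtP t q.
  + have := h t ltac:(lia) ltac:(lia); rewrite !natp_ins_succ_le; try lia.
    by rewrite bump_succ_eq neq_q ?andbT //; lia.
  + have := h t.+1 ltac:(lia) ltac:(lia); rewrite !natp_ins_succ_gt //=; try lia.
    by rewrite bump_succ_eq neq_q ?andbT //; lia.
  + subst t; have := h q.+1 ltac:(lia) ltac:(lia).
    by rewrite natp_ins_succ_gt ?natp_ins_succ_mid ?bump_eq_succ //=; lia.
- have [tlt|qt|tq'] := ltngtP t q; last by rewrite tq' eqxx in tq.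
  + rewrite !natp_ins_succ_le; try lia.
    rewrite bump_succ_eq neq_q ?andbT; try lia.
    by apply: h => //; lia.
  + have [tq1|tq1] := eqVneq t q.+1.
      subst t; rewrite natp_ins_succ_gt // natp_ins_succ_mid /= bump_eq_succ.
      by apply: h => //; lia.
    rewrite !natp_ins_succ_gt //=; try lia.
    rewrite bump_succ_eq neq_q ?andbT; try lia.
    by have := h t.-1; rewrite prednK; [apply=> //; lia | lia].
Qed.

Lemma ins_succ_mem y :
  (ins_succ y \in ins_max_pairs :&: succ_at) = (y \in setX [set: 'I_k.+1] (nosucc0 k)).
Proof.
case: y => q s; have qk := ltn_ord q; have sqk := natp_lt s qk.
rewrite !inE /= nosucc_on_ins_succ natp_ins_succ_mid !natp_ins_succ_le //.
rewrite [bump _ (natp s q)]bumpE ltnn eqxx ltnS qk !andbT.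
have -> : (natp s q != k.+1) = true by lia.
by rewrite bumpE; case: leqP => h0 //=; apply/idP/idP; lia.
Qed.

Lemma ins_succ_inj : injective ins_succ.
Proof.
move=> [q s] [q' s'] /pair_equal_spec[/(congr1 val) /= /val_inj <- e].
have := congr1 (fun t : 'S_k.+2 => t (lift ord0 q)) e; rewrite /= !lift_perm_id => sq.
by move: e; rewrite sq => /lift_perm_inj ->.
Qed.

Lemma ins_succ_onto x : x \in ins_max_pairs :&: succ_at -> exists y, x = ins_succ y.
Proof.
case: x => q' u; rewrite !inE /= => /andP[_ /andP[qk /eqP usucc]].
pose q : 'I_k.+1 := @Ordinal k.+1 q' qk; pose p := lift ord0 q; pose r := unlift_perm u p.
have lift_pq : lift p q = q' :> nat by rewrite /= bumpE ltnn.
have up_val : u p = (natp u q').+1 :> nat by rewrite -usucc -(natpE u p) lift0.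
have up : u p = lift ord0 (r q).
  have : bump (u p) (r q) = natp u q'.
    by rewrite -[bump _ _]/(lift (u p) (r q) : nat) lift_unlift_perm -natpE lift_pq.
  rewrite up_val bumpE => e; apply: ord_inj; rewrite lift0 up_val.
  by move: e; case: leqP; lia.
exists (q, r); congr pair; first exact: val_inj.
by rewrite /= (unlift_permK up).
Qed.

Lemma card_ins_max_pairsI_succ :
  #|ins_max_pairs :&: succ_at| = #|setX [set: 'I_k.+1] (nosucc0 k)|.
Proof. exact: card_inj_preim ins_succ_inj ins_succ_mem ins_succ_onto. Qed.

End NosuccRecurrence.

Lemma card_nosucc0SS k :
  #|nosucc0 k.+2| = k.+1 * (#|nosucc0 k.+1| + #|nosucc0 k|).
Proof.
rewrite card_ins_max_pairs -(cardsID (succ_at k)).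
rewrite card_ins_max_pairsI_succ card_ins_max_pairsD_succ !cardsX cardsT card_ord.
by rewrite mulnDr addnC.
Qed.

Lemma card_nosucc0_0 : #|nosucc0 0| = 1.
Proof.
rewrite (_ : nosucc0 0 = setT) ?cardsT ?card_Sn //.
apply/setP => s; rewrite !inE (natpE s ord0) [s ord0]ord1 /=.
by apply/nosucc_onP.
Qed.

Lemma card_nosucc0_1 : #|nosucc0 1| = 0.
Proof.
apply/eqP; rewrite cards_eq0; apply/eqP/setP => s; rewrite !inE.
apply/negP => /andP[/eqP s0 /nosucc_onP /(_ 0 isT isT) s1].
have s10 : natp s 1 <> natp s 0 by move/(natp_inj (isT : 1 < 2) (isT : 0 < 2)).
by have := natp_lt s (isT : 1 < 2); lia.
Qed.

Lemma card_nosucc0 k : #|nosucc0 k| = Der k.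
Proof.
suff : #|nosucc0 k| = Der k /\ #|nosucc0 k.+1| = Der k.+1 by case.
elim: k => [|k [IH IHS]]; first by rewrite card_nosucc0_0 card_nosucc0_1 Der0 Der1.
by split => //; rewrite card_nosucc0SS DerSS IH IHS.
Qed.

Lemma eqn_modD_succ m a b c : b < m ->
  ((b + c) %% m == ((a + c) %% m).+1 %% m) = (b == a.+1 %% m).
Proof. by move=> bm; rewrite -addn1 modnDml addn1 -addSn eqn_modDr modn_small. Qed.

Section Rotation.
Variable k : nat.
Local Notation n := k.+1.

Definition nosucc_mod (s : 'S_n) :=
  [forall t : 'I_n, (t.+1 < n) ==> (natp s t.+1 != (natp s t).+1 %% n)].

Lemma avoids_cyclicE (s : 'S_n) : avoids_cyclic s = nosucc_mod s.
Proof.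
apply/forallP/forallP => h t.
- apply/implyP => tn.
  have st : contains_pattern s (s t) (s (Ordinal tn)).
    by apply/existsP; exists t; apply/existsP; exists (Ordinal tn); rewrite !eqxx.
  move: (forallP (h (s t)) (s (Ordinal tn))); rewrite st implybF.
  by rewrite (natp_ord s tn) natpE.
- apply/forallP => j; apply/implyP => /eqP def_j.
  apply/negP => /existsP[u /existsP[v /andP[/andP[/eqP def_v /eqP su] /eqP sv]]].
  have {}def_v : v = u.+1 :> nat := def_v.
  have {}def_j : j = t.+1 %% n :> nat := def_j.
  have un : u.+1 < n by rewrite -def_v.
  by have /implyP/(_ un) := h u; rewrite -def_v !natpE su sv def_j eqxx.
Qed.

Definition rot (c : 'I_n) : 'S_n := perm (@GRing.addIr _ c).

Lemma natp_rot (s : 'S_n) c t : t < n -> natp (s * rot c)%g t = (natp s t + c) %% n.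
Proof. by move=> tn; rewrite !(natp_ord _ tn) permM permE. Qed.

Lemma nosucc_mod_rot (s : 'S_n) c : nosucc_mod (s * rot c)%g = nosucc_mod s.
Proof.
apply: eq_forallb => t; apply: implyb_id2l => tn.
by rewrite !natp_rot ?(ltnW tn) // eqn_modD_succ // natp_lt.
Qed.

Lemma rot0 c : rot c ord0 = c.
Proof. by rewrite permE GRing.add0r. Qed.

Lemma nosucc0_mod (s : 'S_n) : (s \in nosucc0 k) = (s ord0 == ord0) && nosucc_mod s.
Proof.
rewrite inE natp0E; have [s0|] //= := eqVneq (s ord0) ord0.
apply: eq_forallb => t /=; rewrite andbT; apply: implyb_id2l => tn.
case: (ltnP (natp s t).+1 n) => [sn|ns]; first by rewrite modn_small.
(* Here s t = n - 1; the value following it cannot be 0, which comes first. *)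
have st1 := natp_lt s tn.
have st10 : natp s t.+1 <> natp s 0 by move/(natp_inj tn (ltn0Sn k)).
have /eqP s0' : natp s 0 == 0 by rewrite natp0E s0.
have -> : (natp s t).+1 = n by have := natp_lt s (ltnW tn); lia.
by rewrite modnn; apply/idP/idP => _; lia.
Qed.

Lemma D_nosucc0 : D n = n * #|nosucc0 k|.
Proof.
rewrite -[n in n * _]card_ord -cardsT -cardsX.
apply: (@card_inj_onto _ _ (fun x : 'I_n * 'S_n => x.2 * rot x.1)%g).
- move=> [c s] [c' s']; rewrite !in_setX !in_setT /= !nosucc0_mod.
  move=> /andP[/eqP s0 _] /andP[/eqP s'0 _] e.
  have eq_c : c = c'.
    by have := congr1 (fun t : 'S_n => t ord0) e; rewrite /= !permM s0 s'0 !rot0.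
  by move: e; rewrite -eq_c => /mulIg ->.
- move=> [c s]; rewrite in_setX in_setT /= nosucc0_mod => /andP[_ hs].
  by rewrite inE avoids_cyclicE nosucc_mod_rot.
- move=> s; rewrite inE avoids_cyclicE => hs.
  exists (s ord0, s * (rot (s ord0))^-1)%g; last by rewrite /= -mulgA mulVg mulg1.
  rewrite in_setX in_setT /= nosucc0_mod -(nosucc_mod_rot _ (s ord0)).
  rewrite -mulgA mulVg mulg1 hs andbT.
  by rewrite permM -{2}(rot0 (s ord0)) permK.
Qed.

End Rotation.

Theorem lemma3p1 (n : nat) (hn : 1 <= n) : D n = n * Der n.-1.
Proof. by case: n hn => [//|k] _; rewrite D_nosucc0 card_nosucc0. Qed.
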